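(* If $M\le 2N-2$, then for every $M$-element frame $\mathcal F$ for $\mathbb R^N$ the map $\mathbb M^{\mathcal F}$ is not injective.
   Context: A frame for $\mathbb R^N$ is a spanning family $\{f_1,\dots,f_M\}$. $\mathbb M^{\mathcal F}:\mathbb R^N/\{\pm1\}\to\mathbb R^M$, $\hat x\mapsto(|\langle x,f_k\rangle|)_k$; injectivity means $|\langle x,f_k\rangle|=|\langle y,f_k\rangle|$ for all $k$ implies $y=\pm x$. *)

From mathcomp Require Import all_boot all_order all_algebra.
From mathcomp Require Import reals.
Set Implicit Arguments. Unset Strict Implicit. Unset Printing Implicit Defensive.
Import Order.TTheory GRing.Theory Num.Theory.
Local Open Scope ring_scope.

Definition inner (R : realType) (N : nat) (x y : 'rV[R]_N) : R :=
  (x *m y^T) 0 0.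

(* A frame {f_1,...,f_M} for R^N: a spanning family, i.e. the matrix
   whose rows are the f_k has full row space. *)
Definition is_frame (R : realType) (N M : nat) (f : 'I_M -> 'rV[R]_N) : Prop :=
  row_full (\matrix_(k < M) f k).

Definition phaseless_map (R : realType) (N M : nat) (f : 'I_M -> 'rV[R]_N)
  (x : 'rV[R]_N) : 'I_M -> R := fun k => `|inner x (f k)|.

Definition phaseless_injective (R : realType) (N M : nat)
  (f : 'I_M -> 'rV[R]_N) : Prop :=
  forall x y : 'rV[R]_N,
    (forall k, phaseless_map f x k = phaseless_map f y k) -> y = x \/ y = - x.

From mathcomp Require Import all_boot all_order all_algebra.
From mathcomp Require Import reals zify.
Set Implicit Arguments. Unset Strict Implicit. Unset Printing Implicit Defensive.
Import Order.TTheory GRing.Theory Num.Theory.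
Local Open Scope ring_scope.

(* Split the frame into two halves of at most N - 1 vectors each and pick
   nonzero u, v orthogonal to the first and to the second half respectively.
   Then <u + v, f_k> = +-<u - v, f_k> for every k, so u + v and u - v have
   the same image under M^F, although u - v = +-(u + v) would force u = 0 or
   v = 0. *)

Lemma card_ord_window (M a n : nat) (A : {set 'I_M}) :
  {in A, forall k : 'I_M, a <= k < a + n}%N -> (#|A| <= n)%N.
Proof.
move=> winA; rewrite cardE -(size_map (fun k : 'I_M => k - a)%N).
rewrite -[n in (_ <= n)%N](size_iota 0); apply: uniq_leq_size.
  rewrite map_inj_in_uniq ?enum_uniq // => k l; rewrite !mem_enum.
  move=> /winA/andP[ak _] /winA/andP[al _] /eqP.
  by rewrite -(eqn_add2r a) !subnK // => /eqP/val_inj.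
move=> x /mapP[k]; rewrite mem_enum => /winA/andP[ak kan] ->.
by rewrite mem_iota add0n ltn_subLR.
Qed.

Lemma exists_nz_orthogonal_rows (F : fieldType) (m n : nat) (B : 'M[F]_(m, n)) :
  (m < n)%N -> exists2 u : 'rV[F]_n, u != 0 & u *m B^T = 0.
Proof.
move=> lt_mn; exists (nz_row (kermx B^T)); last first.
  by apply/sub_kermxP; apply: nz_row_sub.
rewrite nz_row_eq0 -mxrank_eq0 mxrank_ker mxrank_tr subn_eq0 -ltnNge.
exact: leq_ltn_trans (rank_leq_row B) lt_mn.
Qed.

Lemma eq_oppv_eq0 (F : numFieldType) (V : lmodType F) (x : V) : x = - x -> x = 0.
Proof.
move/eqP; rewrite -addr_eq0 -mulr2n -scaler_nat scaler_eq0 pnatr_eq0 /=.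
by move/eqP.
Qed.

Section Frame.
Variables (R : realType) (N M : nat) (f : 'I_M -> 'rV[R]_N).

Lemma inner_sum (x y : 'rV[R]_N) : inner x y = \sum_j x 0 j * y 0 j.
Proof. by rewrite /inner mxE; apply: eq_bigr => j _; rewrite mxE. Qed.

Lemma innerDl (x y z : 'rV[R]_N) : inner (x + y) z = inner x z + inner y z.
Proof. by rewrite /inner mulmxDl mxE. Qed.

Lemma innerBl (x y z : 'rV[R]_N) : inner (x - y) z = inner x z - inner y z.
Proof. by rewrite /inner mulmxBl !mxE. Qed.

Lemma exists_nz_orthogonal_to_frame (A : {set 'I_M}) :
  (#|A| < N)%N -> exists2 u : 'rV[R]_N, u != 0 &
    {in A, forall k, inner u (f k) = 0}.
Proof.
move=> ltAN; pose B := \matrix_(i < #|A|) f (enum_val i).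
have [u u_neq0 uB0] := exists_nz_orthogonal_rows B ltAN; exists u => // k Ak.
have /matrixP/(_ 0 (enum_rank_in Ak k)) := uB0.
rewrite !mxE inner_sum => uBk; rewrite -[RHS]uBk.
by apply: eq_bigr => j _; rewrite mxE /B mxE enum_rankK_in.
Qed.

Lemma phaseless_map_addB (A : {set 'I_M}) (u v : 'rV[R]_N) :
  {in A, forall k, inner u (f k) = 0} ->
  {in ~: A, forall k, inner v (f k) = 0} ->
  phaseless_map f (u + v) =1 phaseless_map f (u - v).
Proof.
move=> uA vA k; rewrite /phaseless_map innerDl innerBl.
have [Ak | nAk] := boolP (k \in A).
  by rewrite uA // !add0r normrN.
by rewrite vA ?inE // addr0 subr0.
Qed.

Lemma not_phaseless_injective_split (A : {set 'I_M}) :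
  (#|A| < N)%N -> (#|~: A| < N)%N -> ~ phaseless_injective f.
Proof.
move=> /exists_nz_orthogonal_to_frame[u u_neq0 uA].
move=> /exists_nz_orthogonal_to_frame[v v_neq0 vA] inj.
case: (inj _ _ (phaseless_map_addB uA vA)) => [/addrI/esym | ].
  by move/eq_oppv_eq0; apply/eqP.
by rewrite opprD => /addIr/eq_oppv_eq0; apply/eqP.
Qed.

End Frame.

Theorem proposition2p5 (R : realType) (N M : nat) :
  (M + 2 <= 2 * N)%N ->
  forall f : 'I_M -> 'rV[R]_N, is_frame f -> ~ phaseless_injective f.
Proof.
move=> leMN f _; have N_gt0 : (0 < N)%N by lia.
pose A := [set k : 'I_M | (k < N.-1)%N].
apply: (@not_phaseless_injective_split _ _ _ f A).
  apply: (@leq_ltn_trans N.-1); last by rewrite ltn_predL.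
  by apply: (@card_ord_window M 0) => k; rewrite inE.
apply: (@leq_ltn_trans N.-1); last by rewrite ltn_predL.
apply: (@card_ord_window M N.-1) => k; rewrite !inE -leqNgt => -> /=.
have := ltn_ord k; lia.
Qed.
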